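(* Let $\mathcal{A}=\{a_1,\ldots,a_n\}$ be a set of $n$ distinct positive integers and let $\phi:\mathbb{R}^n_{\ge0}\to\mathbb{R}^n_{\ge0}$, $\phi_j(x)=\sum_{i=1}^n x_i^{a_j}$. Then $\phi$ is injective up to permuting coordinates: if $x,y\in\mathbb{R}^n_{\ge0}$ satisfy $\phi(x)=\phi(y)$, then $y$ is obtained from $x$ by a permutation of the coordinates. Equivalently, a vector in $\mathbb{R}^n_{\ge0}$ is determined up to permutation of coordinates by its $p$-norms $\|x\|_p=(\sum_i x_i^p)^{1/p}$ for $p\in\mathcal{A}$. *)

From mathcomp Require Import all_boot all_order all_algebra all_fingroup.
From mathcomp Require Import all_reals.
Set Implicit Arguments. Unset Strict Implicit. Unset Printing Implicit Defensive.
Import Order.TTheory GRing.Theory Num.Theory.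
Local Open Scope ring_scope.

Definition power_sum_map (R : realType) (n : nat) (a : 'I_n -> nat)
  (x : 'I_n -> R) : 'I_n -> R :=
  fun j => \sum_(i < n) x i ^+ a j.

From mathcomp Require Import all_boot all_order all_algebra all_fingroup.
From mathcomp Require Import all_reals.
From mathcomp Require Import polyrcf.
From mathcomp Require Import ring lra zify.
Import Order.TTheory GRing.Theory Num.Theory.
Local Open Scope ring_scope.
Set Implicit Arguments. Unset Strict Implicit.

(* Sort x and y nonincreasingly and pair the entries of equal rank. If the
   sorted vectors differ, keep the pairs (u, v) with u <> v: both coordinates
   decrease along this list, so whenever the sign of u - v flips between
   consecutive pairs, the intervals between u and v are separated by a point,
   and fewer than n points Z account for all sign changes. A dimension count
   and Descartes' rule of signs give a combination of the monomials
   X^(a_j - 1) that changes sign exactly at Z. Its primitive Q is a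
   combination of the X^(a_j), so sum_i Q(x_i) = sum_i Q(y_i) by hypothesis,
   whereas by the mean value theorem every pair contributes
   Q(u) - Q(v) = Q'(r) (u - v) > 0. *)

Section SparsePoly.
Variable R : comNzRingType.

Definition sparse_poly n (e : 'I_n -> nat) (c : 'I_n -> R) : {poly R} :=
  \sum_(j < n) c j *: 'X^(e j).

Lemma horner_sparse_poly n (e : 'I_n -> nat) c x :
  (sparse_poly e c).[x] = \sum_(j < n) c j * x ^+ e j.
Proof. by rewrite horner_sum; apply: eq_bigr => j _; rewrite hornerZ hornerXn. Qed.

Lemma sum_horner_sparse_poly n (e : 'I_n -> nat) c (s : seq R) :
  \sum_(u <- s) (sparse_poly e c).[u] = \sum_(j < n) c j * \sum_(u <- s) u ^+ e j.
Proof.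
under eq_bigr do rewrite horner_sparse_poly.
by rewrite exchange_big; apply: eq_bigr => j _; rewrite mulr_sumr.
Qed.

Lemma sparse_polyZ n (e : 'I_n -> nat) c k :
  sparse_poly e (fun j => k * c j) = k *: sparse_poly e c.
Proof. by rewrite scaler_sumr; apply: eq_bigr => j _; rewrite scalerA. Qed.

Lemma deriv_sparse_poly n (e : 'I_n -> nat) c :
  (sparse_poly e c)^`() = sparse_poly (fun j => (e j).-1) (fun j => c j * (e j)%:R).
Proof.
rewrite linear_sum /=; apply: eq_bigr => j _.
by rewrite derivZ derivXn -scaler_nat scalerA.
Qed.

Lemma sparse_poly_widen m n (le_mn : (m <= n)%N) (e : 'I_n -> nat) (c : 'I_m -> R) :
  exists c' : 'I_n -> R, sparse_poly e c' = sparse_poly (e \o widen_ord le_mn) c.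
Proof.
exists (fun j => if insub (val j) is Some i then c i else 0).
rewrite /sparse_poly (bigID (fun j : 'I_n => (j < m)%N)) /= big_ord_narrow.
rewrite [X in _ + X]big1 ?addr0 => [|j /negbTE jm]; last by rewrite insubF // scale0r.
by apply: eq_bigr => i _; case: insubP => [i' _ /val_inj -> | /=]; rewrite ?ltn_ord.
Qed.

Lemma sparse_poly_lift n (e : 'I_n.+1 -> nat) c j0 :
  sparse_poly e c = c j0 *: 'X^(e j0) +
                    sparse_poly (fun i => e (lift j0 i)) (fun i => c (lift j0 i)).
Proof. exact: bigD1_ord. Qed.

Lemma sparse_poly_shift n (e : 'I_n -> nat) c k : (forall j, k <= e j)%N ->
  sparse_poly e c = 'X^k * sparse_poly (fun j => e j - k)%N c.
Proof.
move=> ke; rewrite mulr_sumr; apply: eq_bigr => j _.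
by rewrite -scalerAr -exprD subnKC.
Qed.

End SparsePoly.

Lemma sparse_poly_vanishing (R : fieldType) n (e : 'I_n -> nat) (Z : seq R) :
  (size Z < n)%N ->
  exists2 c : 'I_n -> R, exists j, c j != 0 & all (root (sparse_poly e c)) Z.
Proof.
move=> ltZn; pose A := \matrix_(j < n, i < size Z) Z`_i ^+ e j.
have /rowV0Pn[v /sub_kermxP vA v_neq0] : kermx A != 0.
  by rewrite -mxrank_eq0 mxrank_ker subn_eq0 -ltnNge (leq_ltn_trans (rank_leq_col A)).
have /rV0Pn[j vj] := v_neq0.
exists (v 0); first by exists j.
apply/allP => z zZ; have zi : (index z Z < size Z)%N by rewrite index_mem.
have := congr1 (fun B : 'M_(1, size Z) => B 0 (Ordinal zi)) vA.
rewrite !mxE => vz; apply/eqP; rewrite horner_sparse_poly -[RHS]vz.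
by apply: eq_bigr => k _; rewrite mxE nth_index.
Qed.

Lemma root_XnM (R : idomainType) (p : {poly R}) k r : r != 0 ->
  root ('X^k * p) r = root p r.
Proof. by move=> r_neq0; rewrite rootM /root hornerXn expf_eq0 (negbTE r_neq0) andbF. Qed.

Lemma root_deriv_XnM (R : idomainType) (p : {poly R}) k r : r != 0 -> root p r ->
  root ('X^k * p)^`() r = root p^`() r.
Proof.
move=> r_neq0 /eqP pr; rewrite /root derivM hornerD !hornerM pr mulr0 add0r.
by rewrite mulf_eq0 hornerXn expf_eq0 (negbTE r_neq0) andbF.
Qed.

Section Descartes.
Variable R : rcfType.
Implicit Types (p : {poly R}) (s : seq R).

Lemma poly_rolle_path p x s : path <%R x s -> all (root p) (x :: s) ->
  exists t, [/\ size t = size s, path <%R x t, all (root p^`()) t &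
                all [predC x :: s] t].
Proof.
elim: s x => [|y s IH] x /=; first by exists [::].
move=> /andP[xy ys] /and3P[/eqP px /eqP py rs].
have [|t [st yt rt tN]] := IH y ys; first by rewrite /= /root py eqxx.
have [c] := poly_rolle xy (etrans px (esym py)); rewrite in_itv /= => /andP[xc cy] rc.
have y_lt_s := order_path_min lt_trans ys.
have y_lt_t := order_path_min lt_trans yt.
exists (c :: t); split => /=.
- by rewrite st.
- rewrite xc; case: t yt {st rt tN y_lt_t} => //= w t /andP[yw ->].
  by rewrite (lt_trans cy yw).
- by rewrite rt andbT; apply/eqP.
- rewrite !inE negb_or (gt_eqF xc) negb_or (lt_eqF cy) /=; apply/andP; split.
    by apply/negP => /(allP y_lt_s); rewrite ltNge (ltW cy).
  apply/allP => w wt; move: (allP tN w wt); rewrite /= !inE !negb_or => ->.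
  by rewrite gt_eqF // (lt_trans xy (allP y_lt_t w wt)).
Qed.

Lemma poly_rolle_uniq p s : uniq s -> all (root p) s ->
  exists t, [/\ size t = (size s).-1, uniq t, all (root p^`()) t &
                all (fun r => (r \notin s) && has (fun u => u < r) s) t].
Proof.
move=> us rs; have ms := mem_sort <=%R s.
have : sorted <%R (sort <=%R s) by rewrite sort_lt_sorted.
have : all (root p) (sort <=%R s) by rewrite (perm_all _ (permEl (perm_sort _ _))).
rewrite -(size_sort <=%R s); case E: (sort <=%R s) => [|x l] rxl xl.
  by exists [::].
have [t [st xt rt tN]] := poly_rolle_path xl rxl.
exists t; split => //; first exact/lt_sorted_uniq/(path_sorted xt).
apply/allP => r rt'; have := allP tN r rt'; rewrite /= -E ms => -> /=.
by apply/hasP; exists x; [rewrite -ms E mem_head | exact: (allP (order_path_min lt_trans xt))].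
Qed.

Lemma poly_rolle_pos_roots p s d :
    uniq s -> all (fun r => 0 < r) s -> all (root p) s ->
    uniq d -> {subset d <= s} -> all (root p^`()) d ->
  exists t, [/\ (size s + size d <= (size t).+1)%N, uniq t,
                all (fun r => 0 < r) t & all (root p^`()) t].
Proof.
move=> us s_pos rs ud ds rd; have [t [st ut rt tN]] := poly_rolle_uniq us rs.
exists (t ++ d); split.
- by rewrite size_cat st; case: (size s) => //= k; rewrite addSn.
- rewrite cat_uniq ut ud andbT; apply/hasPn => r /ds r_s.
  by apply/negP => /(allP tN); rewrite r_s.
- rewrite all_cat; apply/andP; split; apply/allP => r; last by move/ds/(allP s_pos).
  by move=> /(allP tN) /andP[_ /hasP[u /(allP s_pos) u_gt0 ur]]; apply: lt_trans ur.
- by rewrite all_cat rt rd.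
Qed.

(* Descartes' bound: fewer than n positive roots counted with multiplicity,
   the roots listed in d being double. *)
Lemma max_sparse_poly_pos_roots n (e : 'I_n -> nat) (c : 'I_n -> R) s d :
    injective e -> (exists j, c j != 0) ->
    uniq s -> all (fun r => 0 < r) s -> all (root (sparse_poly e c)) s ->
    uniq d -> {subset d <= s} -> all (root (sparse_poly e c)^`()) d ->
  (size s + size d < n)%N.
Proof.
elim: n e c s d => [|n IH] e c s d e_inj [j cj] us s_pos rs ud ds rd.
  by case: j {cj}.
have [j0 _ e_min] := @arg_minnP _ ord0 xpredT e isT.
pose P1 := sparse_poly (fun j => e j - e j0)%N c.
have EP : sparse_poly e c = 'X^(e j0) * P1 by apply: sparse_poly_shift => k; apply: e_min.
have s_neq0 r : r \in s -> r != 0 by move/(allP s_pos)/gt_eqF ->.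
have rs1 : all (root P1) s.
  by apply/allP => r rs'; rewrite -(root_XnM _ (e j0) (s_neq0 r rs')) -EP (allP rs).
have rd1 : all (root P1^`()) d.
  apply/allP => r rd'; have rs' := ds r rd'.
  by rewrite -(root_deriv_XnM (e j0) (s_neq0 r rs') (allP rs1 r rs')) -EP (allP rd).
have e_lift i : (e j0 < e (lift j0 i))%N.
  by rewrite ltn_neqAle e_min // (inj_eq e_inj) neq_lift.
have := sparse_poly_lift (fun j => e j - e j0)%N c j0; rewrite /= subnn -/P1 => EP1.
case: (boolP [exists i, c (lift j0 i) != 0]) => [/existsP[i ci] | /existsPn c0]; last first.
  have cj0 : c j0 != 0 by case: (unliftP j0 j) cj => [i ->|->//]; rewrite (negPn (c0 i)).
  have P1_const r : P1.[r] = c j0.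
    rewrite EP1 /sparse_poly big1 => [|i _]; last by rewrite (eqP (negPn (c0 i))) scale0r.
    by rewrite addr0 hornerZ hornerXn expr0 mulr1.
  have := uniq_leq_size ud ds; case: s {us s_pos rs ds s_neq0} rs1 => [_|r s /andP[]].
    by rewrite leqn0 => /eqP->.
  by rewrite /root P1_const (negbTE cj0).
pose e1 k := (e (lift j0 k) - e j0).-1.
have e1_inj : injective e1.
  move=> k k' /= ee'; apply: (lift_inj (h := j0)); apply: e_inj.
  have := e_lift k; have := e_lift k'; rewrite /e1 in ee'; clear -ee'; lia.
pose c1 k := c (lift j0 k) * (e (lift j0 k) - e j0)%:R.
have dP1 : P1^`() = sparse_poly e1 c1.
  by rewrite EP1 derivD derivZ derivXn mulr0n scaler0 add0r deriv_sparse_poly.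
have [t [le_st ut t_pos rt]] := poly_rolle_pos_roots us s_pos rs1 ud ds rd1.
have : (size t + 0 < n)%N.
  apply: (IH e1 c1 t [::] e1_inj) => //; last by rewrite -dP1.
  by exists i; rewrite mulf_neq0 // pnatr_eq0 -lt0n subn_gt0 e_lift.
by rewrite addn0 => lt_tn; apply: leq_ltn_trans le_st _.
Qed.

Lemma noroot_sparse_poly_cofactor (Z : seq R) (e : 'I_(size Z).+1 -> nat) c H :
    injective e -> (exists j, c j != 0) -> uniq Z -> all (fun z => 0 < z) Z ->
    sparse_poly e c = H * \prod_(z <- Z) ('X - z%:P) ->
  forall r, 0 < r -> ~~ root H r.
Proof.
move=> e_inj c_neq0 uZ Z_pos EH r r_gt0; apply/negP => Hr.
have rZ : all (root (sparse_poly e c)) Z.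
  apply/allP => z zZ; rewrite EH rootM orbC.
  by rewrite -/(root _ z) root_prod_XsubC zZ.
have [rZ'|rZ'] := boolP (r \in Z).
  suff : (size Z + size [:: r] < (size Z).+1)%N by rewrite addn1 ltnn.
  apply: (max_sparse_poly_pos_roots e_inj c_neq0 uZ Z_pos rZ) => //.
    by move=> u; rewrite inE => /eqP->.
  rewrite /= andbT /root EH derivM hornerD !hornerM (eqP Hr) mul0r addr0.
  by rewrite mulf_eq0 orbC -/(root _ r) root_prod_XsubC rZ'.
suff : (size (r :: Z) + 0 < (size Z).+1)%N by rewrite addn0 ltnn.
apply: (max_sparse_poly_pos_roots (d := [::]) e_inj c_neq0) => //=; first by rewrite rZ'.
  by rewrite r_gt0 Z_pos.
by rewrite rZ andbT /root EH hornerM (eqP Hr) mul0r.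
Qed.

Lemma noroot_pos_sign p : (forall r, 0 < r -> ~~ root p r) ->
  forall r, 0 < r -> 0 < p.[1] * p.[r].
Proof.
move=> p_noroot r r_gt0; have [r_le1|r_gt1] := lerP r 1.
  rewrite mulrC; apply: (@noroot_noivt _ _ r 1); rewrite ?in_itv /= ?lexx ?r_le1 //.
  by move=> u; rewrite in_itv /= => /andP[ru _]; apply: p_noroot (lt_le_trans r_gt0 ru).
apply: (@noroot_noivt _ _ 1 r); rewrite ?in_itv /= ?lexx ?(ltW r_gt1) //.
by move=> u; rewrite in_itv /= => /andP[ru _]; apply: p_noroot (lt_le_trans ltr01 ru).
Qed.

Lemma sparse_poly_sign n (e : 'I_n -> nat) (Z : seq R) :
    injective e -> uniq Z -> all (fun z => 0 < z) Z -> (size Z < n)%N ->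
  exists c : 'I_n -> R, forall r, 0 < r -> r \notin Z ->
    0 < (sparse_poly e c).[r] * \prod_(z <- Z) (r - z).
Proof.
move=> e_inj uZ Z_pos ltZn; pose e' := e \o widen_ord ltZn.
suff [c sgn_c] : exists c : 'I_(size Z).+1 -> R, forall r, 0 < r -> r \notin Z ->
    0 < (sparse_poly e' c).[r] * \prod_(z <- Z) (r - z).
  by have [c' Ec'] := sparse_poly_widen ltZn e c; exists c'; rewrite Ec'.
have e'_inj : injective e'.
  by move=> i j /e_inj/(congr1 val) /= ij; apply: val_inj.
have [c c_neq0 rZ] := sparse_poly_vanishing e' (ltnSn (size Z)).
have [H EH] := uniq_roots_prod_XsubC rZ (etrans (uniq_rootsE Z) uZ).
have H_sign := noroot_pos_sign (noroot_sparse_poly_cofactor e'_inj c_neq0 uZ Z_pos EH).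
exists (fun j => H.[1] * c j) => r r_gt0 rZ'.
have prod_neq0 : \prod_(z <- Z) (r - z) != 0.
  by rewrite prodf_seq_neq0; apply/allP => z zZ; rewrite subr_eq0; apply: contraNneq rZ' => ->.
rewrite sparse_polyZ hornerZ EH hornerM horner_prod.
under eq_bigr do rewrite hornerXsubC.
by rewrite mulrA -mulrA -expr2 mulr_gt0 ?H_sign // exprn_even_gt0.
Qed.

End Descartes.

Section SignSwitches.
Variable R : realFieldType.
Implicit Types (p : R * R) (r : R) (Z : seq R).

Definition between p r := (p.1 < r < p.2) || (p.2 < r < p.1).

Definition dominates p q := (q.1 <= p.1) && (q.2 <= p.2).

Lemma between_gt p r : between p r -> (p.1 < r) || (p.2 < r).
Proof. by case/orP=> /andP[-> _] //; rewrite orbT. Qed.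

Lemma between_lt p r : between p r -> (r < p.1) || (r < p.2).
Proof. by case/orP=> /andP[_ ->] //; rewrite orbT. Qed.

Lemma between_midpoint p : p.1 != p.2 -> between p ((p.1 + p.2) / 2).
Proof.
case/lt_total/orP => lt12; rewrite /between.
  by have [-> ->] := midf_lt lt12.
by rewrite addrC; have [-> ->] := midf_lt lt12; rewrite orbT.
Qed.

Lemma prod_subr_gt0 Z r : all (fun z => z < r) Z -> 0 < \prod_(z <- Z) (r - z).
Proof. by move=> /allP Zr; rewrite big_seq prodr_gt0 // => z /Zr; rewrite subr_gt0. Qed.

Lemma sign_switch_separates p0 p1 (eps : R) : dominates p0 p1 -> p0.1 != p0.2 ->
  0 < eps * (p1.1 - p1.2) -> eps * (p0.1 - p0.2) <= 0 ->
  Num.max p1.1 p1.2 <= Num.min p0.1 p0.2.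
Proof.
rewrite /dominates ge_max !le_min => /andP[le1 le2] /lt_total/orP[]lt0 sgn1 sgn0.
  have lt1 : p1.2 < p1.1 by nra.
  by rewrite le1 le2 /=; apply/andP; split; lra.
have lt1 : p1.1 < p1.2 by nra.
by rewrite le1 le2 /= andbT; apply/andP; split; lra.
Qed.

Lemma sign_switches p0 (l : seq (R * R)) :
    pairwise dominates (p0 :: l) -> all (fun p => p.1 != p.2) (p0 :: l) ->
    all (fun p => (0 <= p.1) && (0 <= p.2)) (p0 :: l) ->
  exists (Z : seq R) (eps : R), [/\ uniq Z, all (fun z => 0 < z) Z,
    (size Z <= size l)%N, all (fun z => z <= Num.min p0.1 p0.2) Z &
    forall p, p \in p0 :: l -> forall r, between p r ->
      0 < eps * (p.1 - p.2) * \prod_(z <- Z) (r - z)].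
Proof.
elim: l p0 => [|p1 l IH] p0 /=.
  move=> _ /andP[neq0 _] _; exists [::], (p0.1 - p0.2); split => // p.
  by rewrite inE => /eqP-> r _; rewrite big_nil mulr1 -expr2 exprn_even_gt0 ?subr_eq0.
move=> /andP[/andP[d01 d0l] pw1] /andP[neq0 neq1] /andP[nn0 nn1].
have [Z [eps [uZ Z_pos sZ Z_le1 sgn]]] := IH p1 pw1 neq1 nn1.
have /andP[/andP[u1_ge0 v1_ge0] _] := nn1; have /andP[neq1' _] := neq1.
have Z_lt r : Num.min p1.1 p1.2 < r -> all (fun z => z < r) Z.
  by move=> r1; apply/allP => z /(allP Z_le1) /le_lt_trans; apply.
have min_le : Num.min p1.1 p1.2 <= Num.min p0.1 p0.2.
  by case/andP: d01 => le11 le22; rewrite le_min !ge_min le11 le22 !orbT.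
have sgn1 : 0 < eps * (p1.1 - p1.2).
  have := sgn p1 (mem_head _ _) _ (between_midpoint neq1').
  by rewrite pmulr_lgt0 // prod_subr_gt0 // Z_lt // gt_min between_gt // between_midpoint.
have [sgn0|sgn0] := ltP 0 (eps * (p0.1 - p0.2)).
  exists Z, eps; split => //; first exact: leqW.
    by apply/allP => z /(allP Z_le1) /le_trans; apply.
  move=> p; rewrite inE => /orP[/eqP-> r pr|]; last exact: sgn.
  by rewrite mulr_gt0 // prod_subr_gt0 // Z_lt // (le_lt_trans min_le) // gt_min between_gt.
(* The sign flips between p1 and p0: a new root at z0 separates them. *)
pose z0 := Num.min p0.1 p0.2.
have max1_le : Num.max p1.1 p1.2 <= z0 := sign_switch_separates d01 neq0 sgn1 sgn0.
have lt_z0 : Num.min p1.1 p1.2 < z0.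
  by apply: lt_le_trans max1_le; rewrite gt_min !lt_max !ltxx /= orbF lt_total.
have Z_lt0 := Z_lt z0 lt_z0.
have sgn0' : 0 < - eps * (p0.1 - p0.2).
  rewrite mulNr oppr_gt0 lt_neqAle sgn0 andbT mulf_neq0 ?subr_eq0 //.
  by apply: contraTneq sgn1 => ->; rewrite mul0r ltxx.
exists (z0 :: Z), (- eps); split => /=.
- by rewrite uZ andbT; apply/negP => /(allP Z_lt0); rewrite ltxx.
- by rewrite Z_pos andbT; apply: le_lt_trans lt_z0; rewrite le_min u1_ge0.
- exact: sZ.
- by rewrite lexx; apply/allP => z /(allP Z_lt0) /ltW.
move=> p; rewrite inE => /orP[/eqP-> r /between_gt|pl r pr]; rewrite big_cons.
  rewrite -gt_min -/z0 => z0_lt_r; rewrite mulr_gt0 // mulr_gt0 ?subr_gt0 //.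
  by rewrite prod_subr_gt0 //; apply/allP => z /(allP Z_lt0) /lt_trans; apply.
have /andP[le1 le2] : dominates p1 p.
  by move: pl; rewrite inE => /orP[/eqP->|/(allP (proj1 (andP pw1)))]; rewrite /dominates ?lexx.
have r_lt_z0 : r < z0.
  apply: lt_le_trans max1_le; rewrite lt_max.
  case/orP: (between_lt pr) => lt_r; first by rewrite (lt_le_trans lt_r le1).
  by rewrite (lt_le_trans lt_r le2) orbT.
set P := \prod_(z <- Z) (r - z).
have -> : - eps * (p.1 - p.2) * ((r - z0) * P) = eps * (p.1 - p.2) * P * (z0 - r) by ring.
by rewrite mulr_gt0 ?subr_gt0 //; apply: sgn.
Qed.

End SignSwitches.

Arguments dominates {R}.

Lemma sumr_zip_sub (T : eqType) (V : zmodType) (f : T -> V) (s t : seq T) :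
  size s = size t ->
  \sum_(u <- s) f u - \sum_(v <- t) f v =
  \sum_(p <- zip s t | p.1 != p.2) (f p.1 - f p.2).
Proof.
elim: s t => [|u s IH] [|v t] //=; first by rewrite !big_nil subr0.
move=> [st].
rewrite !big_cons /= -IH // opprD addrACA.
by case: eqP => [->|_]; rewrite ?subrr ?add0r.
Qed.

Lemma pairwise_zip (T1 T2 : Type) (r1 : rel T1) (r2 : rel T2) s t :
  pairwise r1 s -> pairwise r2 t ->
  pairwise (fun p q => r1 p.1 q.1 && r2 p.2 q.2) (zip s t).
Proof.
elim: s t => [|u s IH] [|v t] //= /andP[us ps] /andP[vt pt]; rewrite IH // andbT.
by elim: s t {IH ps pt} us vt => [|u' s IH] [|v' t] //= /andP[-> us] /andP[-> vt]; apply: IH.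
Qed.

Lemma perm_eq_mktuple (T : eqType) n (x y : 'I_n -> T) :
  perm_eq [tuple y i | i < n] [tuple x i | i < n] ->
  exists s : 'S_n, forall i, y i = x (s i).
Proof.
case/tuple_permP => s ys; exists s => i.
by have := congr1 (fun u => nth (y i) u i) ys; rewrite /= !nth_mktuple tnth_mktuple.
Qed.

Section PowerSums.
Variable R : rcfType.

Lemma poly_mvt_between (P : {poly R}) (p : R * R) : p.1 != p.2 ->
  exists2 r, between p r & P.[p.1] - P.[p.2] = P^`().[r] * (p.1 - p.2).
Proof.
case/lt_total/orP => lt12; have [r] := poly_mvt P lt12; rewrite in_itv /= => r12 E.
  by exists r; rewrite /between ?r12 // -opprB E -mulrN opprB.
by exists r; rewrite /between ?r12 ?orbT.
Qed.

Lemma sparse_poly_separates_pairs n (a : 'I_n -> nat) p0 (l : seq (R * R)) :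
    injective a -> (forall j, 0 < a j)%N -> (size l < n)%N ->
    pairwise dominates (p0 :: l) -> all (fun p => p.1 != p.2) (p0 :: l) ->
    all (fun p => (0 <= p.1) && (0 <= p.2)) (p0 :: l) ->
  exists b : 'I_n -> R,
    0 < \sum_(p <- p0 :: l) ((sparse_poly a b).[p.1] - (sparse_poly a b).[p.2]).
Proof.
move=> a_inj a_pos lt_ln l_dom l_neq l_ge0.
have [Z [eps [uZ Z_pos sZ _ sgn]]] := sign_switches l_dom l_neq l_ge0.
pose e j := (a j).-1.
have e_inj : injective e.
  move=> i j eij; apply: a_inj; have := a_pos i; have := a_pos j.
  by rewrite /e in eij; clear -eij; lia.
have [c sgn_c] := sparse_poly_sign e_inj uZ Z_pos (leq_ltn_trans sZ lt_ln).
exists (fun j => eps * c j / (a j)%:R); set Q := sparse_poly a _.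
have dQ : Q^`() = eps *: sparse_poly e c.
  rewrite deriv_sparse_poly -sparse_polyZ; apply: eq_bigr => j _.
  by rewrite divfK // pnatr_eq0 -lt0n a_pos.
have term_gt0 p : p \in p0 :: l -> 0 < Q.[p.1] - Q.[p.2].
  move=> pl; have [r pr ->] := poly_mvt_between Q (allP l_neq p pl).
  have := sgn p pl r pr; set Pi := \prod_(z <- Z) (r - z) => sgn_r.
  have r_gt0 : 0 < r.
    by have /andP := allP l_ge0 p pl; case/orP: (between_gt pr) => ? []; lra.
  have rZ : r \notin Z.
    by apply: contraTN sgn_r => rZ; rewrite /Pi (big_rem r rZ) /= subrr mul0r mulr0 ltxx.
  have := sgn_c r r_gt0 rZ; rewrite -/Pi dQ hornerZ => sgn_c_r; nra.
rewrite big_cons (lt_le_trans (term_gt0 _ (mem_head _ _))) // lerDl big_seq sumr_ge0 //.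
by move=> p pl; rewrite ltW // term_gt0 // inE pl orbT.
Qed.

Lemma sorted_power_sums_inj n (a : 'I_n -> nat) (s t : seq R) :
    injective a -> (forall j, 0 < a j)%N -> (size s <= n)%N -> size t = size s ->
    sorted >=%R s -> sorted >=%R t ->
    all (fun u => 0 <= u) s -> all (fun v => 0 <= v) t ->
    (forall j, \sum_(u <- s) u ^+ a j = \sum_(v <- t) v ^+ a j) ->
  s = t.
Proof.
move=> a_inj a_pos le_sn st s_sorted t_sorted s_ge0 t_ge0 psum.
have zip1 : unzip1 (zip s t) = s by rewrite unzip1_zip ?st.
have zip2 : unzip2 (zip s t) = t by rewrite unzip2_zip ?st.
case El : [seq p <- zip s t | p.1 != p.2] => [|p0 l].
  have /hasPn eq_zip : ~~ has (fun p => p.1 != p.2) (zip s t) by rewrite has_filter El.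
  by rewrite -[LHS]zip1 -[RHS]zip2; apply/eq_in_map => p /eq_zip /negPn /eqP.
have lt_ln : (size l < n)%N.
  apply: leq_trans le_sn; rewrite -[(size l).+1]/(size (p0 :: l)) -El size_filter.
  by rewrite (leq_trans (count_size _ _)) // size_zip st minnn.
have l_dom : pairwise dominates (p0 :: l).
  have [ps pt] : pairwise >=%R s /\ pairwise >=%R t.
    by rewrite -!sorted_pairwise //; apply: ge_trans.
  by rewrite -El; apply: pairwise_filter; apply: (pairwise_zip ps pt).
have l_neq : all (fun p => p.1 != p.2) (p0 :: l) by rewrite -El filter_all.
have l_ge0 : all (fun p => (0 <= p.1) && (0 <= p.2)) (p0 :: l).
  apply/allP => p; rewrite -El mem_filter => /andP[_ pst].
  have p1s : p.1 \in s by rewrite -zip1 map_f.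
  have p2t : p.2 \in t by rewrite -zip2 map_f.
  by rewrite (allP s_ge0 _ p1s) (allP t_ge0 _ p2t).
have [b] := sparse_poly_separates_pairs a_inj a_pos lt_ln l_dom l_neq l_ge0.
rewrite -El big_filter -sumr_zip_sub ?st // !sum_horner_sparse_poly -sumrB.
by rewrite big1 ?ltxx // => j _; rewrite psum subrr.
Qed.

End PowerSums.

Theorem proposition5p1 (R : realType) (n : nat) (a : 'I_n -> nat)
  (a_inj : injective a) (a_pos : forall j, (0 < a j)%N)
  (x y : 'I_n -> R)
  (hx : forall i, 0 <= x i) (hy : forall i, 0 <= y i)
  (hphi : power_sum_map a x = power_sum_map a y) :
  exists s : 'S_n, forall i, y i = x (s i).
Proof.
pose sort_ge (z : 'I_n -> R) := sort >=%R [tuple z i | i < n].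
have size_sort_ge z : size (sort_ge z) = n by rewrite size_sort size_tuple.
have sort_ge_sorted z : sorted >=%R (sort_ge z) by apply: sort_sorted; exact: ge_total.
have sort_ge0 z : (forall i, 0 <= z i) -> all (fun u => 0 <= u) (sort_ge z).
  by move=> z_ge0; rewrite all_sort; apply/allP => _ /mapP[i _ ->].
have psum z j : \sum_(u <- sort_ge z) u ^+ a j = power_sum_map a z j.
  rewrite (perm_big _ (permEl (perm_sort _ _))) big_tuple.
  by apply: eq_bigr => i _; rewrite tnth_mktuple.
have Exy : sort_ge x = sort_ge y.
  apply: (sorted_power_sums_inj a_inj a_pos); rewrite ?size_sort_ge ?sort_ge0 //.
  by move=> j; rewrite !psum hphi.
apply: perm_eq_mktuple; apply/(perm_sortP ge_total ge_trans ge_anti).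
by rewrite -/(sort_ge y) -/(sort_ge x) Exy.
Qed.
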